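(* Let $\mathcal{G}=(\mathcal{V},\mathcal{E})$ be a square lattice with open boundary conditions and one smooth defect. Concretely, take a finite rectangular grid graph and remove a square block of plaquettes lying in its interior: delete the vertices and edges strictly inside the block and keep the cycle of edges that bounds it. All edges carry the same positive weight, and $T=\emptyset$. Let $\Gamma\subseteq\mathcal{E}$ be the set of edges crossed by a path on the dual lattice that connects the defect (the face formed by the removed block) to the external boundary (the outer face). Let $E,E'\subseteq\mathcal{E}$ be any two uncorrectable chains. Then there is a sequence of chains $E=E_0,E_1,\ldots,E_k=E'$ such that each $E_{i+1}$ is obtained from $E_i$ by adding or removing a single edge (i.e. $|E_i\oplus E_{i+1}|=1$), and every $E_i$ is uncorrectable.
   Context: A chain is a subset of edges. Its boundary $\partial E$ is the set of vertices incident to an odd number of edges of $E$. The symbol $\oplus$ denotes symmetric difference. Given edge weights $\phi(e)$, the weight of a chain is $\phi(E)=\sum_{e\in E}\phi(e)$. $\mathcal{C}_{min}(S,T)$ is the set of minimum-weight chains $R$ with $(\partial R)\setminus T=S$; here $T=\emptyset$. The parity of a chain is $\epsilon(E)=|E\cap\Gamma|\bmod 2$. An error chain $E$ with syndrome $S=(\partial E)\setminus T$ is correctable iff $\epsilon(R)=\epsilon(E)$ for all $R\in\mathcal{C}_{min}(S,T)$, and uncorrectable otherwise. *)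

From HB Require Import structures.
From mathcomp Require Import all_boot all_order all_algebra.
Set Implicit Arguments. Unset Strict Implicit. Unset Printing Implicit Defensive.
Import Order.TTheory GRing.Theory Num.Theory.

Section Chains.
Local Open Scope ring_scope.
Variables (V Ed : finType) (inc : V -> Ed -> bool).
Variables (R : numDomainType) (phi : Ed -> R).

Definition bdry (E : {set Ed}) : {set V} :=
  [set v | odd #|[set e in E | inc v e]|].

Definition symdiff (A B : {set Ed}) : {set Ed} := (A :\: B) :|: (B :\: A).

Definition weight (E : {set Ed}) : R := \sum_(e in E) phi e.

Definition is_Cmin (S T : {set V}) (Rc : {set Ed}) : Prop :=
  bdry Rc :\: T = S /\
  (forall R' : {set Ed}, bdry R' :\: T = S -> weight Rc <= weight R').

Definition parity (Gam E : {set Ed}) : bool := odd #|E :&: Gam|.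

Definition correctable (T : {set V}) (Gam E : {set Ed}) : Prop :=
  forall Rc : {set Ed}, is_Cmin (bdry E :\: T) T Rc -> parity Gam Rc = parity Gam E.

Definition uncorrectable (T : {set V}) (Gam E : {set Ed}) : Prop :=
  ~ correctable T Gam E.
End Chains.

(* Square lattice of W x H plaquettes (vertices (x,y), 0<=x<=W,        *)
(* 0<=y<=H) with the s x s block of plaquettes with lower-left corner  *)
(* (a,b) removed: vertices strictly inside the block are deleted, and  *)
(* hence all edges strictly inside it; the boundary cycle is kept.    *)
Section Lattice.
Variables W H a b s : nat.

Definition Vtx : finType := ('I_W.+1 * 'I_H.+1)%type.

Definition in_block_v (x y : nat) : bool :=
  (a < x < a + s) && (b < y < b + s).

(* raw edges: ((x,y), false) = horizontal edge (x,y)-(x+1,y),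
              ((x,y), true)  = vertical edge   (x,y)-(x,y+1) *)
Definition edge_ok (e : Vtx * bool) : bool :=
  let x := nat_of_ord e.1.1 in let y := nat_of_ord e.1.2 in
  if e.2 then (y < H) && ~~ in_block_v x y && ~~ in_block_v x y.+1
  else (x < W) && ~~ in_block_v x y && ~~ in_block_v x.+1 y.

Definition Edge : finType := {e : Vtx * bool | edge_ok e}.

Definition inc (v : Vtx) (e : Edge) : bool :=
  let p := (val e).1 in let d := (val e).2 in
  (v == p) ||
  ((nat_of_ord v.1 == (nat_of_ord p.1 + ~~ d)%N) &&
   (nat_of_ord v.2 == (nat_of_ord p.2 + d)%N)).

(* Faces: inl (x,y) = unit plaquette with lower-left corner (x,y);
          inr true  = the defect face (removed block);
          inr false = the outer face. *)
Definition Face : eqType := ((nat * nat) + bool)%type.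
Definition Defect : Face := inr true.
Definition Outer : Face := inr false.

Definition pf (x y : nat) : Face :=
  if (x < W) && (y < H) then
    (if (a <= x < a + s) && (b <= y < b + s) then Defect else inl (x, y))
  else Outer.

Definition sides (e : Edge) : Face * Face :=
  let x := nat_of_ord (val e).1.1 in let y := nat_of_ord (val e).1.2 in
  if (val e).2 then ((if x == 0%N then Outer else pf x.-1 y), pf x y)
  else ((if y == 0%N then Outer else pf x y.-1), pf x y).

Definition crosses (e : Edge) (fg : Face * Face) : bool :=
  (sides e == fg) || (sides e == (fg.2, fg.1)).

Definition dual_cut (Gam : {set Edge}) : Prop :=
  exists (fs : seq Face) (es : seq Edge),
    [/\ size fs = (size es).+1,
        head Outer fs = Defect /\ last Defect fs = Outer,
        uniq fs,
        all2 crosses es (zip fs (behead fs))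
      & Gam = [set e in es]].
End Lattice.

(* An error E is uncorrectable iff some minimum-weight chain A with the boundary of E
   has the other parity.  Removing one edge e of A from both A and E preserves this
   (A - e is a minimum chain for E + e), so each uncorrectable chain is joined by single
   flips to an odd cycle: a chain with empty boundary meeting Gam oddly, which is itself
   uncorrectable since the empty chain corrects it.  Two odd cycles differ by a cycle C
   meeting Gam evenly.  Counting crossings of C along horizontal dual paths gives a face
   function whose coboundary is C; it is constant on the defect, and telescoping along
   the dual path of Gam shows that it vanishes there, so C is a sum of ordinary
   plaquettes.  A plaquette with sides e1 e2 e3 e4 is added one edge at a time; the
   intermediate chains have corrections e1, e1 + e2 and e4 of the wrong parity. *)

From HB Require Import structures.
From mathcomp Require Import all_boot all_order all_algebra zify.
From Stdlib Require Import Classical.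
Import Order.TTheory GRing.Theory Num.Theory.
Set Implicit Arguments. Unset Strict Implicit. Unset Printing Implicit Defensive.

Section SymmetricDifference.
Variable T : finType.
Implicit Types A B C : {set T}.

Lemma in_symdiff A B x : (x \in symdiff A B) = (x \in A) (+) (x \in B).
Proof. by rewrite !inE; case: (x \in A); case: (x \in B). Qed.

Lemma symdiffC A B : symdiff A B = symdiff B A.
Proof. by apply/setP => x; rewrite !in_symdiff addbC. Qed.

Lemma symdiffA A B C : symdiff A (symdiff B C) = symdiff (symdiff A B) C.
Proof. by apply/setP => x; rewrite !in_symdiff addbA. Qed.

Lemma symdiff0s A : symdiff set0 A = A.
Proof. by apply/setP => x; rewrite in_symdiff inE. Qed.

Lemma symdiffss A : symdiff A A = set0.
Proof. by apply/setP => x; rewrite in_symdiff addbb inE. Qed.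

Lemma symdiffKl A B : symdiff A (symdiff A B) = B.
Proof. by rewrite symdiffA; apply/setP => x; rewrite !in_symdiff addbb. Qed.

Lemma symdiffKr A B : symdiff (symdiff A B) B = A.
Proof. by rewrite -symdiffA; apply/setP => x; rewrite !in_symdiff addbb addbF. Qed.

Lemma symdiff_set1 (x y : T) : x != y -> symdiff [set x] [set y] = [set x; y].
Proof.
move=> xy; apply/setP => z; rewrite in_symdiff !inE.
by case: (z =P x) => [->|]; rewrite ?(negbTE xy) ?orbF.
Qed.

Lemma setD1_symdiff A x : x \in A -> A :\ x = symdiff A [set x].
Proof.
by move=> Ax; apply/setP => y; rewrite in_symdiff !inE; case: eqP => [->|]; rewrite ?Ax ?addbF.
Qed.

Lemma card_symdiff_set1 A x : #|symdiff A [set x]| <= #|A|.+1.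
Proof.
apply: (leq_trans (subset_leq_card (_ : _ \subset x |: A))).
  by apply/subsetP => y; rewrite in_symdiff !inE; case: (y == x); case: (y \in A).
by rewrite cardsU1; case: (x \notin A).
Qed.

End SymmetricDifference.

Section XorSum.
Variable T : finType.
Implicit Types (A B : {set T}) (F G : pred T).

Definition xorsum A F : bool := \big[addb/false]_(x in A) F x.

Lemma xorsumE A F : xorsum A F = \big[addb/false]_x ((x \in A) && F x).
Proof. by rewrite /xorsum big_mkcond /=; apply: eq_bigr => x _; case: (x \in A). Qed.

Lemma odd_card_xorsum A F : odd #|[set x in A | F x]| = xorsum A F.
Proof.
rewrite -sum1_card (big_morph odd oddD (erefl (odd 0))) xorsumE big_mkcond /=.
by apply: eq_bigr => x _; rewrite !inE; case: (x \in A); case: (F x).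
Qed.

Lemma eq_xorsum A F G : {in A, F =1 G} -> xorsum A F = xorsum A G.
Proof. exact: eq_bigr. Qed.

Lemma xorsum_false A F : {in A, forall x, F x = false} -> xorsum A F = false.
Proof. exact: big1. Qed.

Lemma xorsum0 F : xorsum set0 F = false.
Proof. exact: big_set0. Qed.

Lemma xorsum1 x F : xorsum [set x] F = F x.
Proof. exact: big_set1. Qed.

Lemma xorsum_addb A F G : xorsum A (fun x => F x (+) G x) = xorsum A F (+) xorsum A G.
Proof. exact: big_split. Qed.

Lemma xorsum_symdiff A B F : xorsum (symdiff A B) F = xorsum A F (+) xorsum B F.
Proof.
rewrite !xorsumE -big_split /=; apply: eq_bigr => x _; rewrite in_symdiff.
by case: (x \in A); case: (x \in B); case: (F x).
Qed.

Lemma big_addb_pred1 (P : pred T) y : \big[addb/false]_(x | P x) (x == y) = P y.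
Proof.
rewrite big_mkcond (bigD1 y) //= eqxx big1 ?addbF; first by case: (P y).
by move=> x /negbTE ->; case: (P x).
Qed.

Lemma xorsum_pred1 A y : xorsum A (pred1 y) = (y \in A).
Proof. exact: big_addb_pred1. Qed.

End XorSum.

Section Chains.
Variables (V Ed : finType) (inc : V -> Ed -> bool) (Gam : {set Ed}).
Implicit Types A B C : {set Ed}.

Lemma bdryE A v : (v \in bdry inc A) = xorsum A (inc v).
Proof. by rewrite inE odd_card_xorsum. Qed.

Lemma parityE A : parity Gam A = xorsum A (mem Gam).
Proof. by rewrite /parity -odd_card_xorsum; congr (odd #|_|); apply/setP => e; rewrite !inE. Qed.

Lemma bdry_symdiff A B : bdry inc (symdiff A B) = symdiff (bdry inc A) (bdry inc B).
Proof. by apply/setP => v; rewrite in_symdiff !bdryE xorsum_symdiff. Qed.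

Lemma parity_symdiff A B : parity Gam (symdiff A B) = parity Gam A (+) parity Gam B.
Proof. by rewrite !parityE xorsum_symdiff. Qed.

Lemma bdry0 : bdry inc set0 = set0.
Proof. by apply/setP => v; rewrite bdryE xorsum0 inE. Qed.

Lemma parity0 : parity Gam set0 = false.
Proof. by rewrite parityE xorsum0. Qed.

(* Exchange the two sums: every vertex meets C an even number of times. *)
Lemma xorsum_incident_cycle C (S : pred V) : bdry inc C = set0 ->
  xorsum C (fun e => \big[addb/false]_(v | S v) inc v e) = false.
Proof.
move=> C0; rewrite /xorsum exchange_big big1 // => v _.
by rewrite -/(xorsum C (inc v)) -bdryE C0 inE.
Qed.

Definition min_chain A := forall Q, bdry inc Q = bdry inc A -> #|A| <= #|Q|.

Lemma min_chain_set1 e : bdry inc [set e] != set0 -> min_chain [set e].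
Proof.
move=> e_bdry Q QA; rewrite cards1 lt0n; apply: contraNneq e_bdry => /cards0_eq Q0.
by rewrite -QA Q0 bdry0.
Qed.

Lemma in_bdry_set1 v e : (v \in bdry inc [set e]) = inc v e.
Proof. by rewrite bdryE xorsum1. Qed.

Lemma min_chain_pair e1 e2 u v :
  u \in bdry inc (symdiff [set e1] [set e2]) -> v \in bdry inc (symdiff [set e1] [set e2]) ->
  (forall e, ~~ (inc u e && inc v e)) -> min_chain (symdiff [set e1] [set e2]).
Proof.
move=> uA vA no_edge Q QA.
have e12 : e1 != e2 by apply: contraTneq uA => ->; rewrite symdiffss bdry0 inE.
rewrite symdiff_set1 // cards2 e12; rewrite -QA in uA vA.
case: (#|Q| =P 0) => [/cards0_eq Q0 | Qn0]; first by move: uA; rewrite Q0 bdry0 inE.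
rewrite ltnNge; apply/negP => Qle1.
have /cards1P [e Qe] : #|Q| == 1 by lia.
by move: uA vA (no_edge e); rewrite Qe !bdryE !xorsum1 => -> ->.
Qed.

End Chains.

Section FlipPath.
Variables (T : finType) (P : {set T} -> Prop).
Implicit Types A B C : {set T}.

Definition flip_path A B := exists Es : seq {set T},
  [/\ last A Es = B, path (fun X Y => #|symdiff X Y| == 1) A Es & forall X, X \in A :: Es -> P X].

Lemma flip_path_refl A : P A -> flip_path A A.
Proof. by move=> PA; exists [::]; split=> // X; rewrite inE => /eqP ->. Qed.

Lemma flip_path1 A x : P A -> P (symdiff A [set x]) -> flip_path A (symdiff A [set x]).
Proof.
move=> PA PAx; exists [:: symdiff A [set x]]; split=> //=; first by rewrite symdiffKl cards1.
by move=> X; rewrite !inE => /orP [] /eqP ->.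
Qed.

Lemma flip_path_trans A B C : flip_path A B -> flip_path B C -> flip_path A C.
Proof.
case=> s1 [s1B s1_path s1P] [s2 [s2C s2_path s2P]]; exists (s1 ++ s2); split.
- by rewrite last_cat s1B.
- by rewrite cat_path s1_path s1B s2_path.
- move=> X; rewrite -cat_cons mem_cat => /orP [/s1P // | X2].
  by apply: s2P; rewrite -s1B inE X2 orbT.
Qed.

Lemma flip_path_sym A B : flip_path A B -> flip_path B A.
Proof.
case=> s [sB s_path sP]; exists (rev (belast A s)); split.
- by case: s sB {s_path sP} => [|y s'] /= => [->|_]; rewrite ?rev_cons ?last_rcons.
- by rewrite -sB rev_path; apply: sub_path s_path => X Y; rewrite symdiffC.
- by move=> X XB; apply: sP; rewrite lastI sB -mem_rev rev_rcons.
Qed.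

End FlipPath.

Section Uncorrectable.
Variables (V Ed : finType) (inc : V -> Ed -> bool) (Gam : {set Ed}).
Variables (R : numDomainType) (c : R).
Hypothesis c_gt0 : (0 < c)%R.
Implicit Types A E X Y Z : {set Ed}.

Local Notation uncorr := (uncorrectable inc (fun _ : Ed => c) set0 Gam).
Local Notation min_chain := (min_chain inc).

Lemma ler_weight A B :
  (weight (fun _ : Ed => c) A <= weight (fun _ : Ed => c) B)%R = (#|A| <= #|B|).
Proof. by rewrite /weight !sumr_const ler_pMn2l. Qed.

Definition bad_correction E A :=
  [/\ bdry inc A = bdry inc E, parity Gam A != parity Gam E & min_chain A].

Lemma uncorrectableP E : uncorr E <-> exists A, bad_correction E A.
Proof.
split=> [E_unc | [A [AE A_parity A_min]] E_corr].
  apply: NNPP => no_bad; apply: E_unc => A [AE A_min]; apply/eqP/negPn/negP => A_parity.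
  apply: no_bad; exists A; split=> // [|Q QA]; first by move: AE; rewrite !setD0.
  by rewrite -ler_weight; apply: A_min; rewrite QA.
move: A_parity; rewrite E_corr ?eqxx //; split=> [|Q]; first by rewrite AE.
by rewrite !setD0 ler_weight => /esym QA; apply: A_min; rewrite AE QA.
Qed.

Definition odd_cycle Z := bdry inc Z = set0 /\ parity Gam Z.

Lemma bad_correction_set0 E : bad_correction E set0 <-> odd_cycle E.
Proof.
rewrite /bad_correction /odd_cycle bdry0 parity0.
split=> [[E0 E_odd _] | [-> ->]]; first by split=> //; apply: negbNE.
by split=> // Q; rewrite cards0.
Qed.

Lemma odd_cycle_uncorrectable Z : odd_cycle Z -> uncorr Z.
Proof. by move=> /bad_correction_set0 Z_bad; apply/uncorrectableP; exists set0. Qed.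

Lemma odd_cycle_symdiff Z X : odd_cycle Z -> bdry inc X = set0 -> parity Gam X = false ->
  odd_cycle (symdiff Z X).
Proof.
move=> [Z0 Z_odd] X0 X_even.
by rewrite /odd_cycle bdry_symdiff parity_symdiff Z0 X0 symdiffss Z_odd X_even.
Qed.

Lemma bad_correction_odd_cycle Y A : odd_cycle Y -> min_chain A -> bad_correction (symdiff Y A) A.
Proof.
move=> [Y0 Y_odd] A_min; rewrite /bad_correction bdry_symdiff parity_symdiff Y0 Y_odd symdiff0s.
by split=> //; case: (parity Gam A).
Qed.

(* A chain shorter than A - e with the boundary of E + e would, after adding e,
   beat A as a correction of E. *)
Lemma bad_correctionD1 E A e : e \in A -> bad_correction E A ->
  bad_correction (symdiff E [set e]) (A :\ e).
Proof.
move=> Ae [AE A_parity A_min]; rewrite setD1_symdiff //.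
split; rewrite ?bdry_symdiff ?parity_symdiff ?AE //.
  by move: A_parity; case: (parity Gam A); case: (parity Gam E); case: (parity Gam [set e]).
move=> Q QA; have := A_min (symdiff Q [set e]).
rewrite bdry_symdiff QA bdry_symdiff symdiffKr => /(_ erefl) AQ.
have := leq_trans AQ (card_symdiff_set1 Q e).
by rewrite (cardsD1 e A) Ae add1n ltnS -setD1_symdiff.
Qed.

Lemma uncorrectable_flip_path_odd_cycle E :
  uncorr E -> exists Z, flip_path uncorr E Z /\ odd_cycle Z.
Proof.
move=> /uncorrectableP [A]; move: {2}#|A| (erefl #|A|) => n.
elim: n E A => [|n IHn] E A A_card E_bad.
  move: E_bad; rewrite (cards0_eq A_card) => /bad_correction_set0 E_odd.
  by exists E; split=> //; apply/flip_path_refl/odd_cycle_uncorrectable.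
have [e Ae] : exists e, e \in A by apply/card_gt0P; rewrite A_card.
have E'_bad := bad_correctionD1 Ae E_bad.
have [|Z [E'Z Z_odd]] := IHn _ _ _ E'_bad; first by move: A_card; rewrite (cardsD1 e A) Ae => -[].
exists Z; split=> //; apply: flip_path_trans E'Z; apply: flip_path1; apply/uncorrectableP.
  by exists A.
by exists (A :\ e).
Qed.

(* The intermediate chains are corrected by e1, by e1 + e2 and by e4, each of the
   wrong parity. *)
Lemma flip_path_add_cycle Z e1 e2 e3 e4 :
  let X := symdiff (symdiff (symdiff [set e1] [set e2]) [set e3]) [set e4] in
  odd_cycle Z -> bdry inc X = set0 -> parity Gam X = false ->
  bdry inc [set e1] != set0 -> bdry inc [set e4] != set0 ->
  min_chain (symdiff [set e1] [set e2]) ->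
  flip_path uncorr Z (symdiff Z X).
Proof.
move=> X Z_odd X0 X_even e1_bdry e4_bdry e12_min.
have ZX_odd := odd_cycle_symdiff Z_odd X0 X_even.
have bad_unc Y A : odd_cycle Y -> min_chain A -> uncorr (symdiff Y A).
  by move=> Y_odd A_min; apply/uncorrectableP; exists A; apply: bad_correction_odd_cycle.
set Z1 := symdiff Z [set e1]; set Z2 := symdiff Z1 [set e2]; set Z3 := symdiff Z2 [set e3].
have Z3E : Z3 = symdiff (symdiff Z X) [set e4].
  by rewrite /X symdiffA symdiffKr !symdiffA.
have Z1_unc : uncorr Z1 by apply: bad_unc; last exact: min_chain_set1.
have Z2_unc : uncorr Z2 by rewrite /Z2 -symdiffA; apply: bad_unc.
have Z3_unc : uncorr Z3 by rewrite Z3E; apply: bad_unc; last exact: min_chain_set1.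
apply: flip_path_trans (flip_path1 (odd_cycle_uncorrectable Z_odd) Z1_unc) _.
apply: flip_path_trans (flip_path1 Z1_unc Z2_unc) _.
apply: flip_path_trans (flip_path1 Z2_unc Z3_unc) _.
have -> : symdiff Z X = symdiff Z3 [set e4] by rewrite Z3E symdiffKr.
by apply: flip_path1; rewrite // -/Z3 Z3E symdiffKr; apply: odd_cycle_uncorrectable.
Qed.

End Uncorrectable.

Section Lattice.
Variables W H a b s : nat.

Local Notation Edg := (Edge W H a b s).
Local Notation Vt := (Vtx W H).
Local Notation incg := (@inc W H a b s).
Implicit Types (C : {set Edg}) (e : Edg) (v : Vt).

Definition edge_x e : nat := (val e).1.1.
Definition edge_y e : nat := (val e).1.2.
Definition edge_vert e : bool := (val e).2.

Lemma edge_okE e :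
  if edge_vert e then
    (edge_y e < H) && ~~ in_block_v a b s (edge_x e) (edge_y e)
                   && ~~ in_block_v a b s (edge_x e) (edge_y e).+1
  else (edge_x e < W) && ~~ in_block_v a b s (edge_x e) (edge_y e)
                      && ~~ in_block_v a b s (edge_x e).+1 (edge_y e).
Proof. exact: (valP e). Qed.

Lemma edge_x_le e : edge_x e <= W. Proof. by rewrite -ltnS ltn_ord. Qed.
Lemma edge_y_le e : edge_y e <= H. Proof. by rewrite -ltnS ltn_ord. Qed.

Lemma eq_edgeE e1 e2 :
  (e1 == e2) = [&& edge_x e1 == edge_x e2, edge_y e1 == edge_y e2 & edge_vert e1 == edge_vert e2].
Proof.
rewrite -val_eqE /edge_x /edge_y /edge_vert.
by case: (val e1) => [[x1 y1] d1]; case: (val e2) => [[x2 y2] d2]; rewrite /= !xpair_eqE andbA.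
Qed.

Lemma edge_head_le e : (edge_x e + ~~ edge_vert e <= W) && (edge_y e + edge_vert e <= H).
Proof.
have := edge_okE e; have := edge_x_le e; have := edge_y_le e.
by case: (edge_vert e) => hy hx /andP [/andP [h _] _]; rewrite /= ?addn0 ?addn1 ?hx ?hy ?h.
Qed.

Definition tail e : Vt := (val e).1.
Definition head e : Vt := (inord (edge_x e + ~~ edge_vert e), inord (edge_y e + edge_vert e)).

Lemma head_xE e : ((head e).1 : nat) = edge_x e + ~~ edge_vert e.
Proof. by case/andP: (edge_head_le e) => hx _; rewrite /= inordK. Qed.

Lemma head_yE e : ((head e).2 : nat) = edge_y e + edge_vert e.
Proof. by case/andP: (edge_head_le e) => _ hy; rewrite /= inordK. Qed.

Lemma incE v e : incg v e =
  ((v.1 : nat) == edge_x e) && ((v.2 : nat) == edge_y e) ||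
  ((v.1 : nat) == edge_x e + ~~ edge_vert e) && ((v.2 : nat) == edge_y e + edge_vert e).
Proof.
rewrite /inc /edge_x /edge_y /edge_vert.
by case: v => i j; case: (val e) => [[x y] d]; rewrite /= xpair_eqE.
Qed.

Lemma inc_addb v e : incg v e = (v == tail e) (+) (v == head e).
Proof.
case/andP: (edge_head_le e) => hx hy.
rewrite incE -!pair_eqE /pair_eq /= -!val_eqE /= !inordK ?ltnS // -/(edge_x e) -/(edge_y e).
by case: (edge_vert e); rewrite /= ?addn0 ?addn1; case: (_ =P edge_x e); case: (_ =P edge_y e); lia.
Qed.

Lemma cycle_cut C (P : nat -> nat -> bool) : bdry incg C = set0 ->
  xorsum C (fun e => P (edge_x e) (edge_y e)
                     (+) P (edge_x e + ~~ edge_vert e) (edge_y e + edge_vert e)) = false.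
Proof.
move=> C0; rewrite -(xorsum_incident_cycle (fun v : Vt => P v.1 v.2) C0).
apply: eq_xorsum => e _; under eq_bigr do rewrite inc_addb.
by rewrite big_split /= !big_addb_pred1 head_xE head_yE.
Qed.

(* [height C x y] counts the crossings of C by the horizontal dual path from the
   left outer face to the plaquette (x, y). *)
Definition height C x y := xorsum C (fun e => edge_vert e && (edge_x e <= x) && (edge_y e == y)).
Definition horiz C x y := xorsum C (fun e => ~~ edge_vert e && (edge_x e == x) && (edge_y e == y)).

(* The cut around the vertex segment [0, x] x {y}. *)
Lemma height_recurrence C x y : bdry incg C = set0 ->
  horiz C x y (+) height C x y
    (+) xorsum C (fun e => edge_vert e && (edge_x e <= x) && ((edge_y e).+1 == y)) = false.
Proof.
move=> C0; rewrite -(cycle_cut (fun i j => (j == y) && (i <= x)) C0) /horiz /height -!xorsum_addb.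
by apply: eq_xorsum => e _ /=; case: (edge_vert e); rewrite /= ?addn0 ?addn1; lia.
Qed.

Lemma height_rec0 C x : bdry incg C = set0 -> horiz C x 0 = height C x 0.
Proof.
move=> /(height_recurrence x 0); rewrite xorsum_false => [|e _]; last by rewrite andbF.
by rewrite addbF; case: (horiz C x 0); case: (height C x 0).
Qed.

Lemma height_recS C x y : bdry incg C = set0 ->
  horiz C x y.+1 (+) height C x y.+1 = height C x y.
Proof.
move=> /(height_recurrence x y.+1).
have -> : xorsum C (fun e => edge_vert e && (edge_x e <= x) && ((edge_y e).+1 == y.+1))
          = height C x y by apply: eq_xorsum => e _; rewrite eqSS.
by case: (horiz C x y.+1 (+) height C x y.+1); case: (height C x y).
Qed.

Lemma horiz_right C y : horiz C W y = false.
Proof.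
apply: xorsum_false => e _; have := edge_okE e.
by case: (edge_vert e) => //=; rewrite /in_block_v; lia.
Qed.

Lemma height_right C y : bdry incg C = set0 -> height C W y = false.
Proof.
move=> C0; elim: y => [|y IHy]; first by rewrite -height_rec0 // horiz_right.
by move: (height_recS W y C0); rewrite horiz_right IHy.
Qed.

Lemma height_top C x y : H <= y -> height C x y = false.
Proof.
move=> Hy; apply: xorsum_false => e _; have := edge_okE e.
by case: (edge_vert e) => //=; rewrite /in_block_v; lia.
Qed.

Lemma height_block_row C x y : a <= x < a + s -> b <= y < b + s -> height C x y = height C a y.
Proof.
move=> hx hy; apply: eq_xorsum => e _; have := edge_okE e.
by case: (edge_vert e) => //=; rewrite /in_block_v; lia.
Qed.

Lemma height_block_col C y : bdry incg C = set0 -> b <= y < b + s -> height C a y = height C a b.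
Proof.
move=> C0; elim: y => [|y IHy] hy; first by have -> : b = 0 by lia.
have [by1|] := eqVneq b y.+1; first by rewrite by1.
move=> bny; rewrite -IHy; last by lia.
have no_horiz : horiz C a y.+1 = false.
  apply: xorsum_false => e _; have := edge_okE e.
  by case: (edge_vert e) => //=; rewrite /in_block_v; lia.
by rewrite -(height_recS a y C0) no_horiz addFb.
Qed.

Definition face_height C (f : Face) : bool :=
  match f : (nat * nat) + bool with
  | inl (x, y) => height C x y
  | inr true => height C a b
  | inr false => false
  end.

Lemma face_height_pf C x y : bdry incg C = set0 -> x <= W -> y <= H ->
  face_height C (pf W H a b s x y) = height C x y.
Proof.
move=> C0 xW yH; rewrite /pf; case: ifP => [/andP [xW' yH'] | out].
  case: ifP => // /andP [hx hy] /=.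
  by rewrite (height_block_row _ hx hy) (height_block_col C0 hy).
have [xltW|] := ltnP x W; first by rewrite height_top //; move: out; rewrite xltW; lia.
move=> Wx; have -> : x = W by lia.
by rewrite height_right.
Qed.

Lemma in_cycle_vert C e : edge_vert e ->
  (e \in C) = (if edge_x e == 0 then false else height C (edge_x e).-1 (edge_y e))
               (+) height C (edge_x e) (edge_y e).
Proof.
move=> vert; rewrite -xorsum_pred1; case: eqP => x0 /=.
  by apply: eq_xorsum => e' _; rewrite /= eq_edgeE vert x0; lia.
by rewrite -xorsum_addb; apply: eq_xorsum => e' _; rewrite /= eq_edgeE vert; lia.
Qed.

Lemma in_cycle_horiz C e : bdry incg C = set0 -> ~~ edge_vert e ->
  (e \in C) = (if edge_y e == 0 then false else height C (edge_x e) (edge_y e).-1)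
               (+) height C (edge_x e) (edge_y e).
Proof.
move=> C0 horizontal; have <- : horiz C (edge_x e) (edge_y e) = (e \in C).
  by rewrite -xorsum_pred1; apply: eq_xorsum => e' _; rewrite /= eq_edgeE; move: horizontal; lia.
case: (edge_y e) => [|y] /=; first exact: height_rec0.
by rewrite -(height_recS _ _ C0) -addbA addbb addbF.
Qed.

Lemma in_cycle_face_height C : bdry incg C = set0 -> forall e,
  (e \in C) = face_height C (sides e).1 (+) face_height C (sides e).2.
Proof.
move=> C0 e; have := edge_x_le e; have := edge_y_le e.
rewrite /sides -/(edge_x e) -/(edge_y e) -/(edge_vert e) => yH xW.
case: ifP => vert; rewrite face_height_pf //.
  rewrite in_cycle_vert //; case: eqP => //= _; rewrite face_height_pf //; lia.
rewrite in_cycle_horiz ?vert //; case: eqP => //= _; rewrite face_height_pf //; lia.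
Qed.

Lemma crossed_sides_mem f0 (fs : seq Face) (es : seq Edg) : size fs = size es ->
  all2 (@crosses W H a b s) es (zip (f0 :: fs) fs) ->
  forall e, e \in es -> ((sides e).1 \in f0 :: fs) && ((sides e).2 \in f0 :: fs).
Proof.
elim: es f0 fs => [|e0 es IHes] f0 [|f1 fs] //= [size_fs] /andP [e0_crosses es_cross] e.
rewrite inE => /orP [/eqP -> | e_es].
  by move: e0_crosses => /orP [] /eqP ->; rewrite /= !inE !eqxx ?orbT.
by case/andP: (IHes f1 fs size_fs es_cross e e_es); rewrite !inE => -> ->; rewrite !orbT.
Qed.

(* An edge crossed twice would make the dual path revisit a face. *)
Lemma dual_path_uniq f0 (fs : seq Face) (es : seq Edg) : size fs = size es ->
  uniq (f0 :: fs) -> all2 (@crosses W H a b s) es (zip (f0 :: fs) fs) -> uniq es.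
Proof.
elim: es f0 fs => [|e0 es IHes] f0 [|f1 fs] //= [size_fs] /andP [f0_fs fs_uniq].
case/andP=> e0_crosses es_cross; rewrite (IHes f1 fs size_fs fs_uniq es_cross) andbT.
apply/negP => e0_es; have := crossed_sides_mem size_fs es_cross e0_es.
by case/orP: e0_crosses => /eqP -> /=; rewrite (negbTE f0_fs) ?andbF.
Qed.

Lemma xorsum_crossings (g : Face -> bool) f0 (fs : seq Face) (es : seq Edg) :
  size fs = size es -> all2 (@crosses W H a b s) es (zip (f0 :: fs) fs) ->
  \big[addb/false]_(e <- es) (g (sides e).1 (+) g (sides e).2) = g f0 (+) g (last f0 fs).
Proof.
elim: es f0 fs => [|e0 es IHes] f0 [|f1 fs] //=; first by rewrite big_nil addbb.
move=> [size_fs] /andP [e0_crosses es_cross]; rewrite big_cons (IHes f1 fs size_fs es_cross).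
have -> : g (sides e0).1 (+) g (sides e0).2 = g f0 (+) g f1.
  by move: e0_crosses => /orP [] /eqP -> //; rewrite addbC.
by rewrite addbA -(addbA (g f0)) addbb addbF.
Qed.

(* Telescoping along the dual path. *)
Lemma parity_dual_cut (g : Face -> bool) (Gam X : {set Edg}) : dual_cut Gam ->
  (forall e, (e \in X) = g (sides e).1 (+) g (sides e).2) ->
  parity Gam X = g Defect (+) g Outer.
Proof.
case=> [[|f0 fs] [es [//= [size_fs] [/= -> fs_last] fs_uniq es_cross ->]]] X_cob.
rewrite -fs_last parityE xorsumE.
have -> : \big[addb/false]_e ((e \in X) && (e \in [set e in es])) =
          \big[addb/false]_(e <- es) (e \in X).
  rewrite [RHS]big_uniq ?(dual_path_uniq size_fs fs_uniq es_cross) // [RHS]big_mkcond /=.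
  by apply: eq_bigr => e _; rewrite inE; case: (e \in es); rewrite ?andbT ?andbF.
under eq_bigr do rewrite X_cob.
exact: xorsum_crossings.
Qed.

Definition off_block x y := ~~ ((a <= x < a + s) && (b <= y < b + s)).

Definition plaquette x y : {set Edg} :=
  [set e | ((sides e).1 == inl (x, y)) (+) ((sides e).2 == inl (x, y))].

Lemma parity_plaquette (Gam : {set Edg}) x y : dual_cut Gam -> parity Gam (plaquette x y) = false.
Proof.
by move=> Gam_cut; rewrite (parity_dual_cut (g := pred1 (inl (x, y))) Gam_cut) // => e; rewrite inE.
Qed.

Lemma pf_inl x y i j : x < W -> y < H -> off_block x y ->
  (pf W H a b s i j == inl (x, y)) = (i == x) && (j == y).
Proof.
move=> xW yH xy_off; rewrite /pf; case: ifP => [ij_in | ij_out]; first case: ifP => ij_block /=.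
- by apply/esym/negbTE; apply: contraNN xy_off => /andP [/eqP <- /eqP <-].
- by apply/eqP/idP => [[-> ->] | /andP [/eqP -> /eqP ->]]; rewrite ?eqxx.
- by apply/esym/negbTE; move: ij_out; apply: contraFN => /andP [/eqP -> /eqP ->]; lia.
Qed.

Definition vertex_at i j : Vt := (inord i, inord j).

Lemma vertex_atE i j : i <= W -> j <= H ->
  ((vertex_at i j).1 : nat) = i /\ ((vertex_at i j).2 : nat) = j.
Proof. by move=> iW jH; rewrite /= !inordK. Qed.

Lemma edge_exists x y (d : bool) : x <= W -> y <= H ->
  (if d then (y < H) && ~~ in_block_v a b s x y && ~~ in_block_v a b s x y.+1
   else (x < W) && ~~ in_block_v a b s x y && ~~ in_block_v a b s x.+1 y) ->
  exists e, [/\ edge_x e = x, edge_y e = y & edge_vert e = d].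
Proof.
move=> xW yH ok; have [vx vy] := vertex_atE xW yH.
have e_ok : edge_ok a b s (vertex_at x y, d) by rewrite /edge_ok /= vx vy.
by exists (Sub _ e_ok).
Qed.

Lemma bdry_edge_neq0 e : bdry incg [set e] != set0.
Proof. by apply/set0Pn; exists (tail e); rewrite in_bdry_set1 incE !eqxx. Qed.

Lemma no_diagonal_edge x y e : x < W -> y < H ->
  ~~ (incg (vertex_at x y) e && incg (vertex_at x.+1 y.+1) e).
Proof.
move=> xW yH; have [ux uy] := vertex_atE (ltnW xW) (ltnW yH).
have [vx vy] := vertex_atE xW yH; rewrite !incE ux uy vx vy.
by case: (edge_vert e); rewrite /= ?addn0 ?addn1; lia.
Qed.

(* The sides of an ordinary face in the order bottom, right, top, left, so that
   e1 + e2 joins two opposite corners. *)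
Lemma plaquette_cycle x y : x < W -> y < H -> off_block x y ->
  exists e1 e2 e3 e4 : Edg,
    [/\ plaquette x y = symdiff (symdiff (symdiff [set e1] [set e2]) [set e3]) [set e4],
        bdry incg (plaquette x y) = set0
      & min_chain incg (symdiff [set e1] [set e2])].
Proof.
move=> xW yH xy_off; move: (xy_off); rewrite /off_block => xy_off'.
have [eB [Bx By Bv]] : exists e, [/\ edge_x e = x, edge_y e = y & edge_vert e = false].
  by apply: edge_exists; rewrite /in_block_v; lia.
have [eR [Rx Ry Rv]] : exists e, [/\ edge_x e = x.+1, edge_y e = y & edge_vert e = true].
  by apply: edge_exists; rewrite /in_block_v; lia.
have [eT [Tx Ty Tv]] : exists e, [/\ edge_x e = x, edge_y e = y.+1 & edge_vert e = false].
  by apply: edge_exists; rewrite /in_block_v; lia.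
have [eL [Lx Ly Lv]] : exists e, [/\ edge_x e = x, edge_y e = y & edge_vert e = true].
  by apply: edge_exists; rewrite /in_block_v; lia.
have plaqE : plaquette x y = symdiff (symdiff (symdiff [set eB] [set eR]) [set eT]) [set eL].
  apply/setP => e; rewrite !in_symdiff !in_set1 !eq_edgeE Bx By Bv Rx Ry Rv Tx Ty Tv Lx Ly Lv inE.
  rewrite /sides -/(edge_x e) -/(edge_y e) -/(edge_vert e).
  case: (edge_vert e) => /=; rewrite !andbF !andbT ?addbF;
    case: ifP => side /=; rewrite ?(pf_inl _ _ xW yH xy_off); clear -side; lia.
exists eB, eR, eT, eL; split=> //.
  apply/setP => v; rewrite plaqE bdryE !xorsum_symdiff !xorsum1 !incE inE.
  rewrite Bx By Bv Rx Ry Rv Tx Ty Tv Lx Ly Lv /= !addn0 !addn1.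
  move: (v.1 : nat) (v.2 : nat) => i j.
  by case: (i =P x); case: (i =P x.+1); case: (j =P y); case: (j =P y.+1); lia.
apply: (@min_chain_pair _ _ _ _ _ (vertex_at x y) (vertex_at x.+1 y.+1)); last first.
  by move=> e; apply: no_diagonal_edge.
all: have [ux uy] := vertex_atE (ltnW xW) (ltnW yH); have [vx vy] := vertex_atE xW yH.
all: rewrite bdryE xorsum_symdiff !xorsum1 !incE ?ux ?uy ?vx ?vy Bx By Bv Rx Ry Rv /=; lia.
Qed.

End Lattice.

Section OddCycles.
Variables (W H a b s : nat) (R : numDomainType) (c : R) (Gam : {set Edge W H a b s}).
Hypotheses (c_gt0 : (0 < c)%R) (Gam_cut : dual_cut Gam).

Local Notation Edg := (Edge W H a b s).
Local Notation incg := (@inc W H a b s).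
Local Notation uncorr := (uncorrectable incg (fun _ : Edg => c) set0 Gam).
Local Notation odd_cycle := (odd_cycle incg Gam).
Implicit Types (C Z : {set Edg}) (l : seq (nat * nat)).

Definition add_plaquettes Z l : {set Edg} :=
  foldl (fun A p => symdiff A (plaquette W H a b s p.1 p.2)) Z l.

Lemma in_add_plaquettes Z l e : (e \in add_plaquettes Z l) =
  (e \in Z) (+) \big[addb/false]_(p <- l) (e \in plaquette W H a b s p.1 p.2).
Proof.
elim: l Z => [|p l IHl] Z /=; first by rewrite big_nil addbF.
by rewrite IHl big_cons in_symdiff addbA.
Qed.

Lemma flip_path_add_plaquettes Z l : odd_cycle Z ->
  (forall p, p \in l -> [&& p.1 < W, p.2 < H & off_block a b s p.1 p.2]) ->
  flip_path uncorr Z (add_plaquettes Z l).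
Proof.
elim: l Z => [|p l IHl] Z Z_odd l_ok /=; first exact/flip_path_refl/odd_cycle_uncorrectable.
have /and3P [pW pH p_off] := l_ok p (mem_head _ _).
have [e1 [e2 [e3 [e4 [plaqE plaq0 e12_min]]]]] := plaquette_cycle pW pH p_off.
have plaq_even := parity_plaquette p.1 p.2 Gam_cut.
apply: flip_path_trans (IHl _ _ _).
- by rewrite plaqE; apply: flip_path_add_cycle; rewrite -?plaqE // bdry_edge_neq0.
- exact: odd_cycle_symdiff.
- by move=> q q_l; apply: l_ok; rewrite inE q_l orbT.
Qed.

Lemma big_addb_inl (l : seq (nat * nat)) (f : Face) : uniq l ->
  \big[addb/false]_(p <- l) (f == inl p) = (if f is inl q then q \in l else false).
Proof.
case: f => [q|d]; last by move=> _; rewrite big1.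
elim: l => [|p l IHl] /=; first by rewrite big_nil.
case/andP=> p_l l_uniq; rewrite big_cons IHl // inE (inj_eq inl_inj).
by case: (q =P p) => [->|] /=; rewrite ?(negbTE p_l).
Qed.

Definition raised_faces C : seq (nat * nat) :=
  [seq p <- [seq (x, y) | x <- iota 0 W, y <- iota 0 H]
     | off_block a b s p.1 p.2 && height C p.1 p.2].

Lemma mem_raised_faces C x y :
  ((x, y) \in raised_faces C) = [&& x < W, y < H, off_block a b s x y & height C x y].
Proof.
rewrite mem_filter /=.
have -> : ((x, y) \in [seq (i, j) | i <- iota 0 W, j <- iota 0 H]) = (x < W) && (y < H).
  apply/allpairsP/andP => [[[i j] [/= iW jH [-> ->]]] | [xW yH]].
    by move: iW jH; rewrite !mem_iota.
  by exists (x, y); rewrite !mem_iota.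
by rewrite andbC -!andbA.
Qed.

Lemma raised_faces_uniq C : uniq (raised_faces C).
Proof.
apply/filter_uniq/allpairs_uniq => [||[? ?] [? ?] _ _ /= [-> ->]] //; exact: iota_uniq.
Qed.

Definition is_raised C (f : Face) : bool :=
  if f is inl q then q \in raised_faces C else false.

Lemma is_raised_sides C (e : Edg) : height C a b = false ->
  is_raised C (sides e).1 = face_height C (sides e).1 /\
  is_raised C (sides e).2 = face_height C (sides e).2.
Proof.
move=> defect0; have pfE i j : is_raised C (pf W H a b s i j) = face_height C (pf W H a b s i j).
  rewrite /pf; case: ifP => // /andP [iW jH]; case: ifP => //= ij_block.
  by rewrite mem_raised_faces /off_block ij_block iW jH.
by rewrite /sides; case: ifP => _; split; case: ifP => _; rewrite ?pfE.
Qed.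

(* C is the coboundary of its height function, which vanishes on the defect face. *)
Lemma even_cycle_plaquettes C : bdry incg C = set0 -> parity Gam C = false ->
  forall e, (e \in C) = \big[addb/false]_(p <- raised_faces C) (e \in plaquette W H a b s p.1 p.2).
Proof.
move=> C0 C_even e; have C_cob := in_cycle_face_height C0.
have defect0 : height C a b = false.
  by move: (parity_dual_cut Gam_cut C_cob); rewrite C_even /= addbF.
under eq_bigr => p _ do rewrite inE -surjective_pairing.
rewrite big_split /= !big_addb_inl ?raised_faces_uniq // C_cob.
rewrite -/(is_raised C (sides e).1) -/(is_raised C (sides e).2).
by case: (is_raised_sides e defect0) => -> ->.
Qed.

Lemma odd_cycles_flip_path Z1 Z2 : odd_cycle Z1 -> odd_cycle Z2 -> flip_path uncorr Z1 Z2.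
Proof.
move=> [Z1_0 Z1_odd] [Z2_0 Z2_odd]; set C := symdiff Z1 Z2.
have C0 : bdry incg C = set0 by rewrite bdry_symdiff Z1_0 Z2_0 symdiffss.
have C_even : parity Gam C = false by rewrite parity_symdiff Z1_odd Z2_odd.
have -> : Z2 = add_plaquettes Z1 (raised_faces C).
  apply/setP => e; rewrite in_add_plaquettes -(even_cycle_plaquettes C0 C_even).
  by rewrite in_symdiff addbA addbb.
apply: flip_path_add_plaquettes => // -[x y].
by rewrite mem_raised_faces => /and4P [xW yH xy_off _]; apply/and3P.
Qed.

End OddCycles.

Theorem lemma3 (W H a b s : nat) (R : realFieldType) (c : R)
    (Gam E E' : {set Edge W H a b s}) :
  (0 < s)%N -> (0 < a)%N -> (a + s < W)%N -> (0 < b)%N -> (b + s < H)%N ->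
  (0 < c)%R ->
  dual_cut Gam ->
  uncorrectable (@inc W H a b s) (fun _ => c) set0 Gam E ->
  uncorrectable (@inc W H a b s) (fun _ => c) set0 Gam E' ->
  exists Es : seq {set Edge W H a b s},
    [/\ last E Es = E',
        path (fun A B => #|symdiff A B| == 1%N) E Es
      & forall A, A \in E :: Es ->
          uncorrectable (@inc W H a b s) (fun _ => c) set0 Gam A].
Proof.
move=> _ _ _ _ _ c_gt0 Gam_cut E_unc E'_unc.
have [Z [EZ Z_odd]] := uncorrectable_flip_path_odd_cycle c_gt0 E_unc.
have [Z' [E'Z' Z'_odd]] := uncorrectable_flip_path_odd_cycle c_gt0 E'_unc.
have ZZ' := odd_cycles_flip_path c_gt0 Gam_cut Z_odd Z'_odd.
exact: flip_path_trans EZ (flip_path_trans ZZ' (flip_path_sym E'Z')).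
Qed.
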